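(* Let $\mathbb O=\{0,1,\dots,M\}$ with integer $M\ge1$, and $\theta=0$. For every $x(0)\in\mathbb O^n$: if there exists a finite legal update sequence from $x(0)$ along which the trajectory reaches the consensus state $(0,\dots,0)$, then there exists a finite legal update sequence from $x(0)$ along which the system reaches a state $y$ (not necessarily an equilibrium) with $y_i=1$ for every $i$ with $x_i(0)>0$.
   Context: Let $n\ge1$, $\mathcal V=\{1,\dots,n\}$, and let $W=(w_{ij})$ be an $n\times n$ row-stochastic matrix. For $x\in\mathbb O^n$, $i\in\mathcal V$, $z\in\mathbb O$, define $C^i_{\mathrm{social}}(z;x)=\sum_{j=1}^n w_{ij}|z-x_j|$ and $P_i(x)=\{z\in\mathbb O: C^i_{\mathrm{social}}(z;x)\le C^i_{\mathrm{social}}(x_i;x),\ |z-\theta|\le |x_i-\theta|\}$. A legal update sequence from $x(0)$ is a finite sequence $(i_1,z_1),\dots,(i_T,z_T)$ with $i_t\in\mathcal V$, generating $x(1),\dots,x(T)$ where $x(t)$ is obtained from $x(t-1)$ by setting coordinate $i_t$ to $z_t$, such that $z_t\in P_{i_t}(x(t-1))$ for every $t$. *)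

From HB Require Import structures.
From mathcomp Require Import all_boot all_order all_algebra.
Set Implicit Arguments. Unset Strict Implicit. Unset Printing Implicit Defensive.
Import Order.TTheory GRing.Theory Num.Theory.
Local Open Scope ring_scope.

(* Opinion space O = {0,...,M} is 'I_M.+1; a state x in O^n is a function 'I_n -> 'I_M.+1. *)

Definition odist (R : numDomainType) (a b : nat) : R := `|(a%:R : R) - b%:R|.

Definition row_stochastic (R : numDomainType) (n : nat) (W : 'M[R]_n) : Prop :=
  (forall i j, 0 <= W i j) /\ (forall i, \sum_(j < n) W i j = 1).

Definition Csocial (R : numDomainType) (n M : nat) (W : 'M[R]_n)
  (x : 'I_n -> 'I_M.+1) (i : 'I_n) (z : 'I_M.+1) : R :=
  \sum_(j < n) W i j * odist R z (x j).

Definition inP (R : numDomainType) (n M : nat) (W : 'M[R]_n) (theta : 'I_M.+1)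
  (x : 'I_n -> 'I_M.+1) (i : 'I_n) (z : 'I_M.+1) : Prop :=
  Csocial W x i z <= Csocial W x i (x i) /\ odist R z theta <= odist R (x i) theta.

Definition upd (n M : nat) (x : 'I_n -> 'I_M.+1) (i : 'I_n) (z : 'I_M.+1)
  : 'I_n -> 'I_M.+1 := fun j => if j == i then z else x j.

Fixpoint run (n M : nat) (x : 'I_n -> 'I_M.+1) (s : seq ('I_n * 'I_M.+1))
  : 'I_n -> 'I_M.+1 :=
  match s with
  | [::] => x
  | (i, z) :: s' => run (upd x i z) s'
  end.

Fixpoint legal (R : numDomainType) (n M : nat) (W : 'M[R]_n) (theta : 'I_M.+1)
  (x : 'I_n -> 'I_M.+1) (s : seq ('I_n * 'I_M.+1)) : Prop :=
  match s with
  | [::] => True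
  | (i, z) :: s' => inP W theta x i z /\ legal W theta (upd x i z) s'
  end.

Definition reaches (n M : nat) (x : 'I_n -> 'I_M.+1) (s : seq ('I_n * 'I_M.+1))
  (y : 'I_n -> 'I_M.+1) : Prop :=
  exists t : nat, (t <= size s)%N /\ forall i, run x (take t s) i = y i.

From HB Require Import structures.
From mathcomp Require Import all_boot all_order all_algebra.
From mathcomp Require Import ring lra zify.
Import Order.TTheory GRing.Theory Num.Theory.
Set Implicit Arguments. Unset Strict Implicit.
Local Open Scope ring_scope.

(* Replay a legal sequence reaching consensus at 0, but let every agent that
   started positive stop at opinion 1 instead of descending to 0.  Agents that
   start at 0 can never move, since a legal update never increases the distance
   to theta = 0.  For any neighbour opinion v in {0, 1} and a, b >= 1, the
   difference |b - v| - |a - v| equals b - a, so lifting neighbours from 0 to 1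
   does not change which of two positive opinions is socially cheaper; and a
   move a -> 0 with C(0) <= C(a) yields C(1) <= C(a) by convexity of C, as
   1 lies between 0 and a. *)

Section Distance.
Variable R : realDomainType.

Lemma odistn0 (a : nat) : odist R a 0 = a%:R.
Proof. by rewrite /odist subr0 ger0_norm ?ler0n. Qed.

Lemma odist_ge (a b : nat) : (b <= a)%N -> odist R a b = a%:R - b%:R.
Proof. by move=> ba; rewrite /odist ger0_norm // subr_ge0 ler_nat. Qed.

Lemma odistB_lift0 (a b v w : nat) :
  (1 <= a)%N -> (1 <= b)%N -> w = v \/ (v = 0%N /\ w = 1%N) ->
  odist R b w - odist R a w = odist R b v - odist R a v.
Proof. by move=> a1 b1 [->//|[-> ->]]; rewrite !odist_ge //; lra. Qed.

Lemma odist1_convex (a v : nat) : (1 <= a)%N ->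
  a%:R * odist R 1 v <= a.-1%:R * odist R 0 v + odist R a v.
Proof.
case: a => // a _ /=; rewrite /odist.
have split1 : (a.+1%:R : R) * (1%:R - v%:R) = a%:R * (0%:R - v%:R) + (a.+1%:R - v%:R).
  by rewrite -natr1; ring.
have := ler_normD ((a%:R : R) * (0%:R - v%:R)) (a.+1%:R - v%:R).
by rewrite -split1 !normrM (ger0_norm (ler0n _ a.+1)) (ger0_norm (ler0n _ a)).
Qed.

End Distance.

Section Lift.
Variables (R : realDomainType) (n M : nat) (W : 'M[R]_n).
Hypothesis W_ge0 : forall i j, 0 <= W i j.
Hypothesis M_gt0 : (0 < M)%N.

Local Notation state := ('I_n -> 'I_M.+1).

Definition one : 'I_M.+1 := inord 1.

Lemma oneE : nat_of_ord one = 1%N.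
Proof. by rewrite inordK // ltnS. Qed.

Variable A : pred 'I_n.

Definition lift (i : 'I_n) (v : 'I_M.+1) : 'I_M.+1 :=
  if (i \in A) && (nat_of_ord v == 0%N) then one else v.

Definition lift_move (p : 'I_n * 'I_M.+1) := (p.1, lift p.1 p.2).

Definition zero_outside (x : state) := forall j, j \notin A -> nat_of_ord (x j) = 0%N.

Lemma liftP i v : lift i v = v \/ (nat_of_ord v = 0%N /\ nat_of_ord (lift i v) = 1%N).
Proof. by rewrite /lift; case: andP => [[_ /eqP v0]|_]; [right; rewrite oneE | left]. Qed.

Lemma lift_ge1 i v : i \in A -> (1 <= lift i v)%N.
Proof. by rewrite /lift => ->; case: eqP => /= [_|/eqP]; rewrite ?oneE // lt0n. Qed.

Lemma lift_ne0 i v : nat_of_ord v != 0%N -> lift i v = v.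
Proof. by rewrite /lift => /negPf ->; rewrite andbF. Qed.

Lemma inP_le (x : state) i z : inP W ord0 x i z -> (z <= x i)%N.
Proof. by case=> _; rewrite !odistn0 ler_nat. Qed.

Lemma CsocialB_lift (x y : state) i (a b : 'I_M.+1) :
  (forall j, y j = x j \/ (nat_of_ord (x j) = 0%N /\ nat_of_ord (y j) = 1%N)) ->
  (1 <= a)%N -> (1 <= b)%N ->
  Csocial W y i b - Csocial W y i a = Csocial W x i b - Csocial W x i a.
Proof.
move=> xy a1 b1; rewrite /Csocial -!sumrB; apply: eq_bigr => j _.
rewrite -!mulrBr; congr (_ * _); apply: odistB_lift0 => //.
by case: (xy j) => [->|]; [left | right].
Qed.

Lemma Csocial_one_le (x : state) i (a z : 'I_M.+1) :
  (1 <= a)%N -> nat_of_ord z = 0%N ->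
  Csocial W x i z <= Csocial W x i a -> Csocial W x i one <= Csocial W x i a.
Proof.
move=> a1 z0 za; set C := Csocial W x i.
have a_gt0 : (0 : R) < (nat_of_ord a)%:R by rewrite ltr0n.
have convex : (nat_of_ord a)%:R * C one <= (nat_of_ord a).-1%:R * C z + C a.
  rewrite /C /Csocial !mulr_sumr -big_split /=; apply: ler_sum => j _.
  rewrite oneE z0 !(mulrCA _ (W i j)) -mulrDr ler_wpM2l //.
  exact: odist1_convex.
have aE : ((nat_of_ord a)%:R : R) = (nat_of_ord a).-1%:R + 1.
  by rewrite natr1 prednK.
rewrite -(ler_pM2l a_gt0); apply: (le_trans convex).
by rewrite aE mulrDl mul1r lerD2r ler_wpM2l.
Qed.

Lemma inP_lift (x y : state) i z : zero_outside x ->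
  (forall j, y j = lift j (x j)) -> inP W ord0 x i z -> inP W ord0 y i (lift i z).
Proof.
move=> xA yE xz; have zx := inP_le xz; have [cost _] := xz.
have [xi0|xi_ne0] := eqVneq (nat_of_ord (x i)) 0%N.
  have -> : z = x i by apply: val_inj => /=; lia.
  by rewrite -yE; split.
have iA : i \in A by apply: contraNT xi_ne0 => /xA ->.
have yi : y i = x i by rewrite yE lift_ne0.
have xi1 : (1 <= x i)%N by lia.
rewrite /inP yi !odistn0 ler_nat; split; last first.
  by rewrite /lift iA /=; case: eqP => [_|//]; rewrite oneE; lia.
rewrite -subr_le0 (CsocialB_lift (x := x) i _ xi1 (lift_ge1 z iA)); last first.
  by move=> j; rewrite yE; apply: liftP.
rewrite subr_le0 /lift iA /=; case: eqP => [z0|_] //.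
exact: Csocial_one_le xi1 z0 cost.
Qed.

Lemma zero_outside_upd (x : state) i z :
  zero_outside x -> inP W ord0 x i z -> zero_outside (upd x i z).
Proof.
move=> xA xz j jA; rewrite /upd; case: eqP => [ji|_]; last exact: xA.
by subst j; have := inP_le xz; rewrite xA //; lia.
Qed.

Lemma lift_upd (x y : state) i z : (forall j, y j = lift j (x j)) ->
  forall j, upd y i (lift i z) j = lift j (upd x i z j).
Proof. by move=> yE j; rewrite /upd; case: eqP => [->|]. Qed.

Lemma legal_lift s : forall x y, zero_outside x -> (forall j, y j = lift j (x j)) ->
  legal W ord0 x s -> legal W ord0 y (map lift_move s).
Proof.
elim: s => [//|[i z] s IH] x y xA yE /= [xz xs]; split; first exact: inP_lift xA yE xz.
exact: IH (zero_outside_upd xA xz) (lift_upd i z yE) xs.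
Qed.

Lemma run_lift s : forall x y, (forall j, y j = lift j (x j)) ->
  forall j, run y (map lift_move s) j = lift j (run x s j).
Proof. by elim: s => [//|[i z] s IH] x y yE /=; apply: IH; apply: lift_upd. Qed.

End Lift.

Theorem corollary2 (R : realFieldType) (n M : nat) (W : 'M[R]_n) :
  (1 <= n)%N -> (1 <= M)%N -> row_stochastic W ->
  forall x0 : 'I_n -> 'I_M.+1,
    (exists s, legal W ord0 x0 s /\ reaches x0 s (fun _ => ord0)) ->
    exists s, legal W ord0 x0 s /\
      exists y : 'I_n -> 'I_M.+1, reaches x0 s y /\
        forall i : 'I_n, (0 < x0 i)%N -> nat_of_ord (y i) = 1%N.
Proof.
move=> _ M_gt0 [W_ge0 _] x0 [s [xs [t [ts reach0]]]].
pose A := [pred j | (0 < x0 j)%N].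
have x0A : zero_outside A x0 by move=> j; rewrite inE -eqn0Ngt => /eqP.
have x0E j : x0 j = lift A j (x0 j).
  have [x0j|x0j] := posnP (x0 j); first by rewrite /lift x0j andbT inE x0j.
  by rewrite lift_ne0 // -lt0n.
exists (map (lift_move A) s); split; first exact: (legal_lift W_ge0 M_gt0 x0A x0E xs).
exists (run x0 (take t (map (lift_move A) s))); split.
  by exists t; rewrite size_map.
move=> i iA; rewrite -map_take (run_lift _ x0E) reach0 /lift.
by rewrite inE iA oneE.
Qed.
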